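(* Let $q$ be a positive multiple of $24$, let $w_A,w_B:\mathbb{Z}/q\mathbb{Z}\to[0,1]$, and let $a,b:\mathbb{Z}/24\mathbb{Z}\to[0,1]$ be $a(k):=\frac{24}{q}\sum_{x\equiv k\ (\mathrm{mod}\ 24)}w_A(x)$, $b(k):=\frac{24}{q}\sum_{x\equiv k\ (\mathrm{mod}\ 24)}w_B(x)$ (sums over $x\in\mathbb{Z}/q\mathbb{Z}$). Then $$\Bigg|\sum_{\substack{m\in\mathbb{Z}/q\mathbb{Z}\\ q\nmid 24m}}\widehat{w_A}(m)\widehat{w_B}(m)\widehat{f_q}(-m)\Bigg|\le\frac1{24\sqrt5}\sqrt{\sum_{k\in\mathbb{Z}/24\mathbb{Z}}\big(a(k)-a(k)^2\big)}\sqrt{\sum_{k\in\mathbb{Z}/24\mathbb{Z}}\big(b(k)-b(k)^2\big)}.$$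
   Context: $e(\theta):=e^{2\pi i\theta}$. For $f:\mathbb{Z}/q\mathbb{Z}\to\mathbb{C}$, $\widehat f(r):=\frac1q\sum_{x\in\mathbb{Z}/q\mathbb{Z}}f(x)e(-rx/q)$, and $f_q(t):=\#\{x\in\mathbb{Z}/q\mathbb{Z}:x^2=t\}$. *)

From mathcomp Require Import all_boot all_order all_algebra.
From mathcomp Require Import all_classical all_reals all_analysis.
From mathcomp Require Export complex.
Import GRing.Theory Num.Theory.
Set Implicit Arguments. Unset Strict Implicit. Unset Printing Implicit Defensive.
Local Open Scope ring_scope.
Local Open Scope complex_scope.

Definition ee (R : realType) (t : R) : R[i] :=
  (cos (2 * pi * t)) +i* (sin (2 * pi * t)).

(* Fourier transform on Z/qZ (elements represented by 'I_q); frequency r : int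
   (only its class mod q matters):  fhat f r = 1/q sum_x f(x) e(-r x / q). *)
Definition fhat (R : realType) (q : nat) (f : 'I_q -> R[i]) (r : int) : R[i] :=
  (q%:R)^-1 * \sum_(x < q) f x * ee (- ((r%:~R * (x : nat)%:R) / q%:R) : R).

Definition fsq (R : realType) (q : nat) (t : 'I_q) : R[i] :=
  (#|[set x : 'I_q | (((x : nat) * x) %% q == (t : nat))%N]|)%:R.

Definition avg24 (R : realType) (q : nat) (w : 'I_q -> R) (k : 'I_24) : R :=
  (24%:R / q%:R) * \sum_(x < q | ((x : nat) %% 24 == (k : nat))%N) w x.

From mathcomp Require Import all_boot all_order all_algebra.
From mathcomp Require Import all_classical all_reals all_analysis.
From mathcomp Require Import complex.
From mathcomp Require Import ring lra.
Import Order.TTheory GRing.Theory Num.Theory.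
Set Implicit Arguments. Unset Strict Implicit. Unset Printing Implicit Defensive.
Local Open Scope ring_scope.
Local Open Scope complex_scope.

(* For q not dividing 24m, fhat f_q (-m) = G(m) / q with G(m) = sum_x e(m x^2 / q)
   a quadratic Gauss sum.  Substituting x = y + h in |G(m)|^2 leaves, for each h,
   a complete character sum in y, whence |G(m)|^2 <= q gcd(2m, q) <= q^2 / 5 and
   |fhat f_q (-m)| <= 1 / sqrt 5.  Cauchy-Schwarz then reduces the claim to bounding
   sum_(q not | 24m) |fhat w (m)|^2.  By Parseval the full sum is (1/q) sum_x w(x)^2,
   and the frequencies m with q | 24m, the multiples of q/24, carry exactly
   (24/q^2) sum_k (sum_(x = k mod 24) w(x))^2 = (1/24) sum_k a(k)^2; since
   w^2 <= w, what remains is at most (1/24) sum_k (a(k) - a(k)^2). *)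

Section ExpCharacter.
Variable R : realType.
Implicit Types s t : R.

Lemma eeD s t : ee (s + t) = ee s * ee t.
Proof.
rewrite /ee mulrDr cosD sinD; apply/eqP; rewrite eq_complex /=.
by apply/andP; split; apply/eqP; ring.
Qed.

Lemma ee0 : ee (0 : R) = 1.
Proof. by rewrite /ee mulr0 cos0 sin0. Qed.

Lemma eeN t : ee (- t) = Num.conj (ee t).
Proof. by rewrite /ee mulrN cosN sinN. Qed.

Lemma norm_ee t : `|ee t| = 1.
Proof. by rewrite normc_def /= cos2Dsin2 sqrtr1. Qed.

Lemma ee_nat (n : nat) : ee (n%:R : R) = 1.
Proof.
rewrite /ee.
have -> : 2 * pi * n%:R = 0 + (pi *+ 2) *+ n :> R.
  by rewrite add0r -mulr_natl -[pi *+ 2]mulr_natl; ring.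
by rewrite (periodicn (@cosD2pi R)) (periodicn (@sinD2pi R)) cos0 sin0.
Qed.

Lemma ee_int (n : int) : ee (n%:~R : R) = 1.
Proof. by case: n => n; rewrite ?NegzE ?mulrNz ?eeN ee_nat ?conjC1. Qed.

Lemma ee_natmul (n : nat) t : ee (n%:R * t) = ee t ^+ n.
Proof.
elim: n => [|n IHn]; first by rewrite mul0r ee0.
by rewrite -addn1 natrD mulrDl mul1r eeD IHn exprD expr1.
Qed.

Lemma ee_neq1 t : 0 < t < 1 -> ee t != 1.
Proof.
move=> /andP[t_gt0 t_lt1]; apply/negP => /eqP [cos_eq1 _].
have sin_gt0 : 0 < sin (pi * t).
  by apply: sin_gt0_pi; rewrite mulr_gt0 ?pi_gt0 //= -[ltRHS]mulr1 ltr_pM2l ?pi_gt0.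
suff : cos ((pi * t) *+ 2) < 1.
  by rewrite (_ : (pi * t) *+ 2 = 2 * pi * t) ?cos_eq1 ?ltxx // mulr2n; ring.
rewrite cos_mulr2n cos2sin2 mulr2n -subr_gt0.
have : 0 < sin (pi * t) ^+ 2 by rewrite exprn_gt0.
lra.
Qed.

End ExpCharacter.

Section ResidueCharacter.
Variables (R : realType) (q : nat).
Hypothesis q_gt0 : (0 < q)%N.

Definition ez (n : int) : R[i] := ee (n%:~R / q%:R).

Lemma ezD a b : ez (a + b) = ez a * ez b.
Proof. by rewrite /ez intrD mulrDl eeD. Qed.

Lemma ezN a : ez (- a) = Num.conj (ez a).
Proof. by rewrite /ez -eeN intrN mulNr. Qed.

Lemma norm_ez a : `|ez a| = 1.
Proof. exact: norm_ee. Qed.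

Lemma ez_mulq (c : int) : ez (c * q%:Z) = 1.
Proof.
rewrite /ez intrM -mulrA (_ : q%:Z%:~R = q%:R :> R) // divff ?mulr1 ?ee_int //.
by rewrite pnatr_eq0 -lt0n.
Qed.

Lemma ez_mod a b : (q%:Z %| a - b)%Z -> ez a = ez b.
Proof. by case/dvdzP => c /(canRL (subrK b)) ->; rewrite ezD ez_mulq mul1r. Qed.

Lemma ez_mulmod (m a b : nat) : a = b %[mod q] -> ez (m%:Z * a%:Z) = ez (m%:Z * b%:Z).
Proof.
move=> eq_ab; apply: ez_mod; rewrite -!PoszM -eqz_mod_dvd !modz_nat eqz_nat.
by rewrite -modnMmr eq_ab modnMmr.
Qed.

Lemma ez_eq1 k : (ez k == 1) = (q%:Z %| k)%Z.
Proof.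
apply/idP/idP => [|/dvdzP[c ->]]; last by rewrite ez_mulq.
apply: contraLR => k_ndvd.
rewrite (@ez_mod k (k %% q)%Z); last by rewrite {1}(divz_eq k q) addrK dvdz_mull.
have r_ge0 : 0 <= (k %% q)%Z by rewrite modz_ge0 // eqz_nat -lt0n.
have r_ltq : (k %% q)%Z < q by rewrite ltz_pmod // ltz_nat.
have r_neq0 : (k %% q)%Z != 0 by apply: contraNneq k_ndvd => /dvdz_mod0P.
apply: ee_neq1; apply/andP; split.
  by rewrite divr_gt0 ?ltr0n // ltr0z lt_def r_neq0.
by rewrite ltr_pdivrMr ?ltr0n // mul1r -[q%:R]/(q%:Z%:~R) ltr_int.
Qed.

Lemma sum_ez (k : int) :
  \sum_(x < q) ez (k * (x : nat)%:Z) = if (q%:Z %| k)%Z then q%:R else 0.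
Proof.
have ez_exp (x : nat) : ez (k * x%:Z) = ez k ^+ x.
  by rewrite /ez -ee_natmul intrM [_ * _%:~R]mulrC -mulrA.
under eq_bigr do rewrite ez_exp.
case: ifP => [k_dvd | k_ndvd].
  have /eqP -> : ez k == 1 by rewrite ez_eq1.
  by under eq_bigr do rewrite expr1n; rewrite sumr_const card_ord.
have : (ez k - 1) * \sum_(i < q) ez k ^+ i = 0 by rewrite -subrX1 -ez_exp ez_mulq subrr.
by move/eqP; rewrite mulf_eq0 subr_eq0 ez_eq1 k_ndvd => /eqP.
Qed.

Lemma fhatE (f : 'I_q -> R[i]) r :
  fhat f r = q%:R^-1 * \sum_(x < q) f x * ez (- (r * (x : nat)%:Z)).
Proof.
rewrite /fhat; congr (_ * _); apply: eq_bigr => x _.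
by rewrite /ez intrN intrM mulNr.
Qed.

End ResidueCharacter.

Lemma ez_mul_divn (R : realType) (q d : nat) (k : int) : (0 < q)%N -> (d %| q)%N ->
  ez R q (k * (q %/ d)%:Z) = ez R d k.
Proof.
move=> q_gt0 /divnK q_eq.
have /andP[qd_gt0 d_gt0] : (0 < q %/ d)%N && (0 < d)%N by rewrite -muln_gt0 q_eq.
rewrite /ez intrM.
have -> : (q%:R : R) = (q %/ d)%:R * d%:R by rewrite -natrM q_eq.
by congr ee; field; rewrite !pnatr_eq0 -!lt0n qd_gt0 d_gt0.
Qed.

Lemma big_nat_dvd (V : nmodType) (n d : nat) (F : nat -> V) : (0 < d)%N ->
  \sum_(0 <= m < (d * n)%N | (d %| m)%N) F m = \sum_(0 <= j < n) F (j * d)%N.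
Proof.
move=> d_gt0; elim: n => [|n IHn]; first by rewrite muln0 !big_geq.
have gap : \sum_((d * n).+1 <= m < (d * n + d)%N | (d %| m)%N) F m = 0.
  rewrite big_nat_cond big1 // => m /andP[/andP[lt_m lt_m'] d_m]; move: d_m.
  rewrite -(subnKC (ltnW lt_m)) dvdn_addr ?dvdn_mulr // gtnNdvd ?subn_gt0 //.
  by rewrite ltn_subLR // ltnW.
rewrite mulnS addnC (@big_cat_nat _ _ _ (d * n)) ?leq_addr //= IHn big_nat_recr //=.
rewrite [\sum_((d * n)%N <= i < _ | _) _]big_ltn_cond; last first.
  by rewrite -{1}(addn0 (d * n)%N) ltn_add2l.
by rewrite (dvdn_mulr n (dvdnn d)) gap addr0 [(d * n)%N]mulnC.
Qed.

Lemma dvdz_subn_mod (d x y : nat) : (d%:Z %| y%:Z - x%:Z)%Z = (x == y %[mod d]).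
Proof. by rewrite -eqz_mod_dvd !modz_nat eqz_nat eq_sym. Qed.

Section FourierZq.
Variables (R : realType) (q : nat).
Hypothesis q_gt0 : (0 < q)%N.
Variable f : 'I_q -> R[i].
Local Notation ez := (ez R q).

Lemma fhat_normCK (m : int) :
  `|fhat f m| ^+ 2 = q%:R^-2 * \sum_(x < q) \sum_(y < q)
      f x * Num.conj (f y) * ez (((y : nat)%:Z - (x : nat)%:Z) * m).
Proof.
rewrite normCK fhatE rmorphM /= fmorphV /= conjC_nat rmorph_sum /= mulrACA -invfM -expr2.
congr (_ * _); rewrite mulr_suml; apply: eq_bigr => x _.
rewrite mulr_sumr; apply: eq_bigr => y _.
by rewrite rmorphM /= -ezN opprK mulrACA -ezD; congr (_ * ez _); ring.
Qed.

(* The m with q | d m are the multiples of q/d, on which e(. / q) becomes e(. / d). *)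
Lemma sum_fhat_dvd_normCK (d : nat) : (d %| q)%N ->
  \sum_(m < q | (q %| d * m)%N) `|fhat f m| ^+ 2 =
  d%:R / q%:R ^+ 2 *
    \sum_(x < q) \sum_(y < q | (x : nat) == y %[mod d]) f x * Num.conj (f y).
Proof.
move=> d_dvd_q; have q_eq := divnK d_dvd_q; set q' := (q %/ d)%N in q_eq.
have /andP[q'_gt0 d_gt0] : (0 < q')%N && (0 < d)%N by rewrite -muln_gt0 q_eq.
have dvd_q' (m : nat) : (q %| d * m)%N = (q' %| m)%N.
  by rewrite -{1}q_eq [(d * m)%N]mulnC dvdn_pmul2r.
under eq_bigl => m do rewrite dvd_q'.
pose F m := `|fhat f m%:Z| ^+ 2.
rewrite -(big_mkord _ F); have := @big_nat_dvd R[i] d q' F q'_gt0; rewrite q_eq => ->.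
rewrite big_mkord; under eq_bigr => j _ do rewrite /F fhat_normCK.
rewrite -mulr_sumr exchange_big /=; under eq_bigr => x _ do rewrite exchange_big /=.
rewrite [d%:R / _]mulrC -mulrA; congr (_ * _).
rewrite mulr_sumr; apply: eq_bigr => x _; rewrite [X in _ = _ * X]big_mkcond /= [RHS]mulr_sumr.
apply: eq_bigr => y _; rewrite -mulr_sumr.
under eq_bigr => j _ do rewrite PoszM mulrA ez_mul_divn //.
rewrite sum_ez ?dvdz_subn_mod //; case: ifP => _; last by rewrite !mulr0.
exact: mulrC.
Qed.

Lemma sum_fhat_normCK :
  \sum_(m < q) `|fhat f m| ^+ 2 = q%:R^-1 * \sum_(x < q) `|f x| ^+ 2.
Proof.
under eq_bigl => m do rewrite -(dvdn_mulr m (dvdnn q)).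
rewrite sum_fhat_dvd_normCK // expr2 invfM mulrA divff ?mul1r; last first.
  by rewrite pnatr_eq0 -lt0n.
congr (_ * _); apply: eq_bigr => x _; rewrite normCK (big_pred1 x) // => y.
by rewrite /= !modn_small // eq_sym.
Qed.

End FourierZq.

Lemma sum_residue_classes (V : nmodType) (q d : nat) (f : 'I_q -> V) : (0 < d)%N ->
  \sum_(k < d) \sum_(x < q | ((x : nat) %% d == k)%N) f x = \sum_(x < q) f x.
Proof.
move=> d_gt0; symmetry.
by rewrite (partition_big (fun x : 'I_q => Ordinal (ltn_pmod x d_gt0)) predT).
Qed.

Lemma sum_sqr_residue_classes (K : comPzRingType) (q d : nat) (f : 'I_q -> K) :
  (0 < d)%N ->
  \sum_(k < d) (\sum_(x < q | ((x : nat) %% d == k)%N) f x) ^+ 2 =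
  \sum_(x < q) \sum_(y < q | (x : nat) == y %[mod d]) f x * f y.
Proof.
move=> d_gt0; rewrite -[RHS](sum_residue_classes _ d_gt0); apply: eq_bigr => k _.
rewrite expr2 mulr_suml; apply: eq_bigr => x /eqP x_mod.
by rewrite mulr_sumr; apply: eq_bigl => y; rewrite x_mod eq_sym.
Qed.

Lemma sum_dvdn_mul (q k : nat) : (0 < q)%N ->
  (\sum_(h < q | q %| k * h) 1 = gcdn k q)%N.
Proof.
move=> q_gt0; set g := gcdn k q; set d := (q %/ g)%N; set k' := (k %/ g)%N.
have q_eq : (d * g)%N = q by rewrite divnK // dvdn_gcdr.
have k_eq : (k' * g)%N = k by rewrite divnK // dvdn_gcdl.
have /andP[d_gt0 g_gt0] : (0 < d)%N && (0 < g)%N by rewrite -muln_gt0 q_eq.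
have coprime_dk' : coprime d k'.
  by rewrite /coprime -(eqn_pmul2r g_gt0) mul1n muln_gcdl q_eq k_eq gcdnC.
have dvd_d (h : nat) : (q %| k * h)%N = (d %| h)%N.
  by rewrite -q_eq -k_eq mulnAC dvdn_pmul2r // Gauss_dvdr.
under eq_bigl => h do rewrite dvd_d.
by rewrite -(big_mkord _ (fun=> 1%N)) -q_eq big_nat_dvd // sum_nat_const_nat muln1 subn0.
Qed.

Lemma mul5_gcdn_leq (q m : nat) : (0 < q)%N -> ~~ (q %| 24 * m)%N ->
  (5 * gcdn (2 * m) q <= q)%N.
Proof.
move=> q_gt0 q_ndvd; set g := gcdn (2 * m) q; set d := (q %/ g)%N.
have q_eq : (d * g)%N = q by rewrite divnK // dvdn_gcdr.
have d_gt0 : (0 < d)%N by move: q_gt0; rewrite -q_eq muln_gt0 => /andP[].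
suff d_gt4 : (4 < d)%N by rewrite -q_eq leq_mul2r d_gt4 orbT.
rewrite ltnNge; apply: contra q_ndvd => d_le4.
(* for d <= 4, 2d | 24, hence q = d g | d (2m) | 24 m *)
have d2_dvd24 : (d * 2 %| 24)%N by move: d_le4 d_gt0; case: (d) => [|[|[|[|[|]]]]].
rewrite -q_eq (@dvdn_trans (d * (2 * m))) ?dvdn_pmul2l ?dvdn_gcdl //.
by rewrite mulnA dvdn_mul.
Qed.

Section GaussSum.
Variables (R : realType) (q : nat).
Hypothesis q_gt0 : (0 < q)%N.
Local Notation ez := (ez R q).

Definition gauss_sum (m : nat) : R[i] :=
  \sum_(x < q) ez (m%:Z * ((x : nat) * x)%N%:Z).

Lemma fhat_fsqN (m : nat) : fhat (@fsq R q) (- m%:Z) = q%:R^-1 * gauss_sum m.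
Proof.
rewrite fhatE; congr (_ * _).
under eq_bigr => t _ do rewrite mulNr opprK /fsq -sum1_card natr_sum mulr_suml.
rewrite (exchange_big_dep xpredT) //=; apply: eq_bigr => x _.
rewrite (big_pred1 (Ordinal (ltn_pmod (x * x) q_gt0))) /=; last first.
  by move=> t; rewrite inE eq_sym.
by rewrite mul1r (@ez_mulmod R q q_gt0 _ _ (x * x)%N) ?modn_mod.
Qed.

Let shift_ord (y h : 'I_q) : 'I_q := Ordinal (ltn_pmod (y + h) q_gt0).

Let shift_ord_inj y : injective (shift_ord y).
Proof.
move=> h1 h2 /(congr1 val) /= /eqP; rewrite eqn_modDl !modn_small // => /eqP h12.
exact: val_inj.
Qed.

Lemma gauss_sum_normCK (m : nat) :
  `|gauss_sum m| ^+ 2 =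
  \sum_(h < q) ez (m%:Z * ((h : nat) * h)%N%:Z) *
    (if (q %| 2 * m * h)%N then q%:R else 0).
Proof.
rewrite normCK rmorph_sum /= mulr_sumr.
transitivity (\sum_(y < q) \sum_(h < q)
    ez (m%:Z * ((h : nat) * h)%N%:Z) * ez ((2 * m * h)%N%:Z * (y : nat)%:Z)).
  apply: eq_bigr => y _; rewrite mulr_suml (reindex_inj (@shift_ord_inj y)) /=.
  apply: eq_bigr => h _.
  rewrite (@ez_mulmod R q q_gt0 m _ ((y + h) * (y + h))%N) ?modnMm //.
  by rewrite -ezN -!ezD; congr ez; rewrite !PoszM !PoszD; ring.
rewrite exchange_big /=; apply: eq_bigr => h _.
by rewrite -mulr_sumr sum_ez // dvdzE.
Qed.

Lemma norm_gauss_sum_sqr_le (m : nat) :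
  `|gauss_sum m| ^+ 2 <= (q * gcdn (2 * m) q)%:R.
Proof.
rewrite -[X in X <= _]ger0_norm ?exprn_ge0 // gauss_sum_normCK.
apply: le_trans (ler_norm_sum _ _ _) _.
rewrite (eq_bigr (fun h : 'I_q => if (q %| 2 * m * h)%N then q%:R else 0)); last first.
  by move=> h _; rewrite normrM norm_ez mul1r; case: ifP; rewrite ?normr0 ?normr_nat.
rewrite -big_mkcond /= -sum_dvdn_mul // natrM natr_sum mulr_sumr.
by apply: ler_sum => h _; rewrite mulr1n mulr1.
Qed.

Lemma norm_fhat_fsq_sqr_le (m : nat) : ~~ (q %| 24 * m)%N ->
  `|fhat (@fsq R q) (- m%:Z)| ^+ 2 <= 5%:R^-1.
Proof.
move=> q_ndvd; rewrite fhat_fsqN normrM exprMn normfV normr_nat.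
apply: le_trans (ler_wpM2l _ (norm_gauss_sum_sqr_le m)) _.
  by rewrite exprn_ge0 // invr_ge0 ler0n.
have q_pos : (0 : R[i]) < q%:R by rewrite ltr0n.
rewrite natrM expr2 -mulrA mulKf ?gt_eqF // ler_pdivrMl // ler_pdivlMr ?ltr0n //.
by rewrite -natrM ler_nat mulnC mul5_gcdn_leq.
Qed.

End GaussSum.

Lemma sqr_sum_mul_le (R : rcfType) (I : finType) (P : pred I) (f g : I -> R) :
  (\sum_(i | P i) f i * g i) ^+ 2 <=
  (\sum_(i | P i) f i ^+ 2) * (\sum_(i | P i) g i ^+ 2).
Proof.
set A := \sum_(i | P i) f i ^+ 2; set B := \sum_(i | P i) f i * g i.
set C := \sum_(i | P i) g i ^+ 2.
have lagrange : \sum_(i | P i) \sum_(j | P j) (f i * g j - f j * g i) ^+ 2 =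
                A * C + C * A - 2 * (B * B).
  rewrite (eq_bigr (fun i => f i ^+ 2 * C + g i ^+ 2 * A - 2 * (f i * g i) * B)).
    by rewrite sumrB big_split /= -!mulr_suml -mulr_sumr mulrA.
  move=> i _; rewrite /A /B /C !mulr_sumr -!big_split -sumrB /=.
  by apply: eq_bigr => j _; ring.
have : 0 <= \sum_(i | P i) \sum_(j | P j) (f i * g j - f j * g i) ^+ 2.
  by apply: sumr_ge0 => i _; apply: sumr_ge0 => j _; apply: sqr_ge0.
rewrite lagrange; nra.
Qed.

Lemma sum_mul_le_sqrt (R : rcfType) (I : finType) (P : pred I) (f g : I -> R) :
  \sum_(i | P i) f i * g i <=
  Num.sqrt (\sum_(i | P i) f i ^+ 2) * Num.sqrt (\sum_(i | P i) g i ^+ 2).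
Proof.
rewrite -sqrtrM; last by apply: sumr_ge0 => i _; apply: sqr_ge0.
apply: le_trans (ler_wsqrtr (sqr_sum_mul_le P f g)).
by rewrite sqrtr_sqr ler_norm.
Qed.

Lemma normc_ge0 (R : rcfType) (z : R[i]) : 0 <= Normc.normc z.
Proof. by rewrite -ler0c; exact: (normr_ge0 z). Qed.

Lemma normc_fhat_fsq_le (R : realType) (q m : nat) : (0 < q)%N -> ~~ (q %| 24 * m)%N ->
  Normc.normc (fhat (@fsq R q) (- m%:Z)) <= (Num.sqrt 5)^-1.
Proof.
move=> q_gt0 q_ndvd; have := @norm_fhat_fsq_sqr_le R q q_gt0 m q_ndvd.
set z := fhat _ _; rewrite (_ : `|z| = (Normc.normc z)%:C) //.
rewrite (_ : 5%:R^-1 = (5%:R^-1 : R)%:C); last by rewrite fmorphV rmorph_nat.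
rewrite -rmorphXn lecR -sqrtrV ?ler0n // => /ler_wsqrtr.
by rewrite sqrtr_sqr ger0_norm ?normc_ge0.
Qed.

Lemma conjC_real_complex (R : rcfType) (x : R) : Num.conj x%:C = x%:C.
Proof. exact: conjc_real. Qed.

Lemma normc_sqrE (R : rcfType) (z : R[i]) : ((Normc.normc z) ^+ 2)%:C = `|z| ^+ 2.
Proof. by rewrite rmorphXn. Qed.

Section WeightBound.
Variables (R : realType) (q : nat).
Hypotheses (q_gt0 : (0 < q)%N) (dvd24_q : (24 %| q)%N).
Variable w : 'I_q -> R.
Hypothesis w01 : forall x, 0 <= w x <= 1.

Lemma sum_normc_fhat_ndvd24 :
  \sum_(m < q | ~~ (q %| 24 * m)%N) Normc.normc (fhat (fun x => (w x)%:C) m) ^+ 2 =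
  q%:R^-1 * \sum_(x < q) w x ^+ 2 -
  24%:R / q%:R ^+ 2 *
    \sum_(k < 24) (\sum_(x < q | ((x : nat) %% 24 == k)%N) w x) ^+ 2.
Proof.
have := sum_fhat_normCK q_gt0 (fun x => (w x)%:C).
rewrite (bigID (fun m : 'I_q => q %| 24 * m)%N) /= sum_fhat_dvd_normCK //.
rewrite sum_sqr_residue_classes //.
move/(canRL (addKr _)); rewrite addrC => eq_ndvd.
apply: (@complexI R); rewrite rmorph_sum /=.
under eq_bigr do rewrite normc_sqrE.
rewrite eq_ndvd rmorphB !rmorphM !fmorphV !rmorph_sum /= rmorphXn !rmorph_nat.
congr (_ * _ - _ * _).
  by apply: eq_bigr => x _; rewrite normCK conjC_real_complex rmorphXn expr2.
apply: eq_bigr => x _; rewrite rmorph_sum; apply: eq_bigr => y _.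
by rewrite conjC_real_complex rmorphM.
Qed.

Lemma sum_normc_fhat_ndvd24_le :
  \sum_(m < q | ~~ (q %| 24 * m)%N) Normc.normc (fhat (fun x => (w x)%:C) m) ^+ 2 <=
  24%:R^-1 * \sum_(k < 24) (avg24 w k - avg24 w k ^+ 2).
Proof.
rewrite sum_normc_fhat_ndvd24 sumrB.
set D := \sum_(k < 24) (\sum_(x < q | _) w x) ^+ 2.
have -> : \sum_(k < 24) avg24 w k = 24%:R / q%:R * \sum_(x < q) w x.
  by rewrite /avg24 -mulr_sumr sum_residue_classes.
have -> : \sum_(k < 24) avg24 w k ^+ 2 = (24%:R / q%:R) ^+ 2 * D.
  by rewrite mulr_sumr; apply: eq_bigr => k _; rewrite /avg24 exprMn.
have sqr_le : \sum_(x < q) w x ^+ 2 <= \sum_(x < q) w x.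
  by apply: ler_sum => x _; have /andP[w_ge0 w_le1] := w01 x; rewrite expr2 ler_piMr.
have q_pos : (0 : R) < q%:R by rewrite ltr0n.
rewrite (_ : 24%:R^-1 * _ = q%:R^-1 * \sum_(x < q) w x - 24%:R / q%:R ^+ 2 * D).
  by rewrite lerD2r ler_pM2l ?invr_gt0.
by field; rewrite gt_eqF.
Qed.

End WeightBound.

Theorem lemma3p5 (R : realType) (q : nat) (hq : (0 < q)%N) (h24 : (24 %| q)%N)
  (wA wB : 'I_q -> R)
  (hA : forall x, 0 <= wA x <= 1) (hB : forall x, 0 <= wB x <= 1) :
  `| \sum_(m < q | ~~ (q %| 24 * m)%N)
        fhat (fun x => (wA x)%:C) (m : nat)%:Z
      * fhat (fun x => (wB x)%:C) (m : nat)%:Z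
      * fhat (@fsq R q) (- (m : nat)%:Z) |
  <= ((24 * Num.sqrt 5)^-1
      * Num.sqrt (\sum_(k < 24) (avg24 wA k - avg24 wA k ^+ 2))
      * Num.sqrt (\sum_(k < 24) (avg24 wB k - avg24 wB k ^+ 2)))%:C.
Proof.
set nA := fun m : 'I_q => Normc.normc (fhat (fun x => (wA x)%:C) (m : nat)%:Z).
set nB := fun m : 'I_q => Normc.normc (fhat (fun x => (wB x)%:C) (m : nat)%:Z).
set SA := \sum_(k < 24) _; set SB := \sum_(k < 24) _.
apply: le_trans (ler_norm_sum _ _ _) _.
rewrite (eq_bigr (fun m : 'I_q =>
    (nA m * nB m * Normc.normc (fhat (@fsq R q) (- (m : nat)%:Z)))%:C)); last first.
  by move=> m _; rewrite 2!normrM !rmorphM.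
rewrite -rmorph_sum lecR.
have inv_sqrt5_ge0 : 0 <= (Num.sqrt 5 : R)^-1 by rewrite invr_ge0 sqrtr_ge0.
apply: (le_trans (y := (Num.sqrt 5)^-1 * \sum_(m < q | ~~ (q %| 24 * m)%N) nA m * nB m)).
  rewrite mulr_sumr; apply: ler_sum => m q_ndvd; rewrite mulrC ler_wpM2r //.
    by rewrite mulr_ge0 ?normc_ge0.
  exact: normc_fhat_fsq_le.
apply: le_trans (ler_wpM2l inv_sqrt5_ge0 (sum_mul_le_sqrt _ nA nB)) _.
have := sum_normc_fhat_ndvd24_le hq h24 hA; have := sum_normc_fhat_ndvd24_le hq h24 hB.
rewrite -/SA -/SB => /ler_wsqrtr boundB /ler_wsqrtr boundA.
apply: le_trans (ler_wpM2l inv_sqrt5_ge0 (ler_pM (sqrtr_ge0 _) (sqrtr_ge0 _) boundA boundB)) _.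
rewrite !sqrtrM ?invr_ge0 ?ler0n //; set s := Num.sqrt (24%:R^-1).
have s_sqr : s ^+ 2 = 24%:R^-1 by rewrite sqr_sqrtr // invr_ge0 ler0n.
rewrite [leRHS](_ : _ = (Num.sqrt 5)^-1 * (s * Num.sqrt SA * (s * Num.sqrt SB))) //.
by rewrite invfM -s_sqr; ring.
Qed.
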